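(* Let $G$ be a graph on $n$ vertices with treewidth $t$, and let $(\{X_i : i\in I\}, r, T)$ be a normalized tree decomposition of $G$ of width $t$. Then there exists $l \in I$ such that $V(G)\setminus X_l$ can be partitioned into three (possibly empty) sets $V_1, V_2, V_3$ such that $G$ has no edge between $V_i$ and $V_j$ for $i\neq j$, and $|V_i| \leq \frac12\left(n - |X_l| + 1\right)$ for each $i\in\{1,2,3\}$.
   Context: A tree decomposition of $G$ is a pair $(\{X_i : i\in I\}, T)$ where $T$ is a tree with node set $I$ and each $X_i\subseteq V(G)$, such that: (1) $\bigcup_{i\in I} X_i = V(G)$; (2) for every edge $\{u,v\}\in E(G)$ there is $i\in I$ with $u,v\in X_i$; (3) for all $i,j,k\in I$, if $j$ lies on the path in $T$ from $i$ to $k$, then $X_i\cap X_k\subseteq X_j$. Its width is $\max_{i\in I}|X_i| - 1$, and the treewidth of $G$ is the minimum width over all tree decompositions of $G$. A normalized tree decomposition is a triple $(\{X_i : i\in I\}, r, T)$ where $(\{X_i\},T)$ is a tree decomposition, $T$ is rooted at $r\in I$, $|X_r| = 1$, and for every node $i$ and every child $i'$ of $i$, the symmetric difference of $X_{i'}$ and $X_i$ has exactly one element. *)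

From mathcomp Require Import all_boot.
Set Implicit Arguments. Unset Strict Implicit. Unset Printing Implicit Defensive.

Definition simple_graph (V : finType) (e : rel V) : Prop :=
  symmetric e /\ irreflexive e.

(* a cycle: x, p_1, ..., p_k (k >= 2) pairwise distinct, consecutive adjacent,
   and p_k adjacent to x *)
Definition acyclic (I : finType) (te : rel I) : Prop :=
  forall (x : I) (p : seq I),
    ~~ [&& 1 < size p, uniq (x :: p), path te x p & te (last x p) x].

Definition is_tree (I : finType) (te : rel I) : Prop :=
  [/\ symmetric te, irreflexive te, 0 < #|I|,
      (forall i j : I, connect te i j) & acyclic te].

Definition on_path (I : finType) (te : rel I) (i j k : I) : Prop :=
  exists p : seq I,
    [&& path te i p, last i p == k, uniq (i :: p) & j \in i :: p].

Definition is_tree_decomp (V : finType) (e : rel V)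
    (I : finType) (te : rel I) (X : I -> {set V}) : Prop :=
  [/\ is_tree te,
      (forall v : V, exists i : I, v \in X i),
      (forall u v : V, e u v -> exists i : I, (u \in X i) && (v \in X i)) &
      (forall i j k : I, on_path te i j k -> X i :&: X k \subset X j)].

Definition width (V I : finType) (X : I -> {set V}) : nat :=
  (\max_(i : I) #|X i|) - 1.

Definition is_treewidth (V : finType) (e : rel V) (t : nat) : Prop :=
  (exists (I : finType) (te : rel I) (X : I -> {set V}),
      is_tree_decomp e te X /\ width X = t) /\
  (forall (I : finType) (te : rel I) (X : I -> {set V}),
      is_tree_decomp e te X -> t <= width X).

Definition child (I : finType) (te : rel I) (r i i' : I) : Prop :=
  te i i' /\ on_path te r i i'.

Definition normalized_tree_decomp (V : finType) (e : rel V)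
    (I : finType) (te : rel I) (r : I) (X : I -> {set V}) : Prop :=
  [/\ is_tree_decomp e te X, #|X r| = 1 &
      (forall i i' : I, child te r i i' ->
         #|(X i' :\: X i) :|: (X i :\: X i')| = 1)].

From mathcomp Require Import all_boot zify.
Set Implicit Arguments. Unset Strict Implicit. Unset Printing Implicit Defensive.

(* For a node l of the tree T and a neighbour c of l, the side of l towards
   c is the set of vertices outside X l occurring in a bag of the branch of
   T - l containing c.  Since the bags containing a vertex form a subtree,
   the sides at l partition V \ X l and no edge joins two of them.

   Call c heavy for l when 2 |side l c| > n - |X l| + 1.  Across an edge lc
   the two opposite sides and X l :&: X c are disjoint, while normalization
   gives |X l| + |X c| = 2 |X l :&: X c| + 1; hence l and c cannot be heavy
   for each other.  If every node had a heavy neighbour, walking to it would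
   never step straight back, producing a cycle in T; so some node l has no
   heavy side.  Finally the sides at l, each of size at most
   (n - |X l| + 1) / 2, are grouped greedily into three parts respecting that
   bound. *)

Definition avoid_rel (I : finType) (te : rel I) (l : I) : rel I :=
  [rel x y | [&& te x y, x != l & y != l]].

Definition branch (I : finType) (te : rel I) (l c : I) : {set I} :=
  [set j | connect (avoid_rel te l) c j].

Lemma connect_uniq_path (T : finType) (e : rel T) (x y : T) : connect e x y ->
  exists p, [&& path e x p, last x p == y & uniq (x :: p)].
Proof.
move=> /connectP [p pp ->]; case: (shortenP pp) => p' pp' up' _.
by exists p'; rewrite pp' up' eqxx.
Qed.

Section Branches.

Variables (I : finType) (te : rel I).

Lemma avoid_sub l : subrel (avoid_rel te l) te.
Proof. by move=> x y /and3P []. Qed.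

Lemma avoid_sym l : symmetric te -> symmetric (avoid_rel te l).
Proof.
by move=> tsym x y; rewrite /avoid_rel /= tsym [(x != l) && _]andbC.
Qed.

Lemma avoid_path l x p :
  path te x p -> l \notin x :: p -> path (avoid_rel te l) x p.
Proof.
elim: p x => //= y p IH x /andP [exy pp].
rewrite !inE !negb_or => /and3P [xl yl lp].
by rewrite /avoid_rel /= exy eq_sym xl eq_sym yl IH // inE negb_or yl.
Qed.

Lemma avoid_notin l x p : path (avoid_rel te l) x p -> l \notin p.
Proof.
elim: p x => //= y p IH x /andP [/and3P [_ _ yl] pp].
by rewrite inE negb_or eq_sym yl (IH _ pp).
Qed.

Lemma branch_notin l c : c != l -> l \notin branch te l c.
Proof.
move=> cl; rewrite inE; apply/connectP => -[p pp lE].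
have := mem_last c p; rewrite -lE inE eq_sym (negbTE cl) /=.
by rewrite (negbTE (avoid_notin pp)).
Qed.

Lemma branch_of_path l q1 q :
  path te l (q1 :: q) -> uniq (l :: q1 :: q) -> last q1 q \in branch te l q1.
Proof.
move=> /= /andP [_ pq] /andP [lq _]; rewrite inE.
by apply/connectP; exists q => //; apply: avoid_path.
Qed.

Hypothesis tree : is_tree te.

(* Different neighbours of l lie in different branches at l: otherwise the
   path joining them in T - l would close a cycle through l. *)
Lemma branch_disj l c1 c2 j : te l c1 -> te l c2 -> c1 != c2 ->
  j \in branch te l c1 -> j \in branch te l c2 -> False.
Proof.
case: tree => tsym tirr _ _ tacyc t1 t2 c12; rewrite !inE => j1 j2.
have : connect (avoid_rel te l) c1 c2.
  by apply: connect_trans j1 _; rewrite (sym_connect_sym (avoid_sym l tsym)).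
move=> /connect_uniq_path [p /and3P [pp /eqP lp up]].
have c1l : c1 != l by apply: contraTneq t1 => ->; rewrite tirr.
have pne : p != [::] by apply: contraNneq c12 => pE; rewrite -lp pE.
apply: (negP (tacyc l (c1 :: p))); rewrite /= lp (tsym c2) t2 t1.
rewrite (sub_path (@avoid_sub l) pp) inE negb_or eq_sym c1l (avoid_notin pp).
by move: up pne => /= /andP [-> ->]; case: p {pp lp}.
Qed.

Lemma branch_opposite l c j : te l c ->
  j \in branch te l c -> j \in branch te c l -> False.
Proof.
case: (tree) => _ tirr _ _ _ tlc jlc; rewrite inE.
have cl : c != l by apply: contraTneq tlc => ->; rewrite tirr.
have jl : j != l by apply: contraTneq jlc => ->; apply: branch_notin.
move=> /connect_uniq_path [[|q1 q] /and3P [pp /eqP lp up]].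
  by rewrite -lp eqxx in jl.
have pq : path te l (q1 :: q) := sub_path (@avoid_sub c) pp.
have := branch_of_path pq up; rewrite /= in lp; rewrite lp => jq1.
move: pp => /= /andP [/and3P [tlq1 _ q1c] _].
exact: branch_disj tlq1 tlc q1c jq1 jlc.
Qed.

Lemma child_or r l c : te l c -> child te r l c \/ child te r c l.
Proof.
case: tree => tsym _ _ tconn _ tlc.
have [p /and3P [pp /eqP lp up]] := connect_uniq_path (tconn r l).
case: (boolP (c \in r :: p)) => cp.
  by right; split; [rewrite tsym | exists p; rewrite pp lp eqxx up].
left; split => //; exists (rcons p c); apply/and4P; split.
- by rewrite rcons_path pp lp tlc.
- by rewrite last_rcons.
- by rewrite -rcons_cons rcons_uniq cp up.
- by rewrite -rcons_cons mem_rcons inE -lp mem_last orbT.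
Qed.

End Branches.

Lemma periodic_point (T : finType) (f : T -> T) (x : T) :
  exists z, fcycle f (orbit f z).
Proof.
have /trajectP [i lt_i_o Ei] := looping_order f x.
exists (iter i f x); apply/(orbitPcycle 0 3); exists (order f x - i).-1.
by rewrite prednK ?subn_gt0 // -iterD subnK 1?ltnW // Ei.
Qed.

(* A tree admits no map sending each node to a neighbour without ever
   sending it straight back: iterating it would produce a cycle. *)
Lemma tree_no_nonbacktracking_map (I : finType) (te : rel I) (f : I -> I) :
  is_tree te -> (forall x, te x (f x)) -> (forall x, f (f x) != x) -> False.
Proof.
case=> _ tirr /card_gt0P [x0 _] _ tacyc tf ff.
have [z zcyc] := periodic_point f x0.
have oE : orbit f z = z :: behead (orbit f z) by rewrite /orbit -orderSpred.
move: (orbit_uniq f z) zcyc; rewrite oE; move: (behead _) => p zuniq zcyc.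
move: zcyc; rewrite /= rcons_path => /andP [pf /eqP lastp].
have frel_te : subrel (frel f) te by move=> a b /eqP <-.
apply: (negP (tacyc z p)); rewrite zuniq (sub_path frel_te pf) -{2}lastp tf.
case: p pf lastp {zuniq} => [|y [|w q]] //= pf lastp.
  by move: (tf z); rewrite lastp tirr.
by move: pf lastp (ff z) => /andP [/eqP -> _] ->; rewrite eqxx.
Qed.

Definition side (V I : finType) (te : rel I) (X : I -> {set V}) (l c : I)
  : {set V} :=
  [set v | (v \notin X l) && [exists i in branch te l c, v \in X i]].

Lemma cardsU_disjoint (T : finType) (A B : {set T}) :
  [disjoint A & B] -> #|A :|: B| = #|A| + #|B|.
Proof. by rewrite -setI_eq0 cardsU => /eqP ->; rewrite cards0 subn0. Qed.

Section Sides.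

Variables (V : finType) (e : rel V) (I : finType) (te : rel I).
Variable X : I -> {set V}.
Hypothesis decomp : is_tree_decomp e te X.

(* A vertex outside X l occurs only in bags of a single branch at l, since
   the bags containing it form a subtree. *)
Lemma branch_closed l c i j v : v \notin X l -> v \in X i -> v \in X j ->
  i \in branch te l c -> j \in branch te l c.
Proof.
case: decomp => [[_ _ _ tconn _] _ _ interp] vl vi vj; rewrite !inE => ci.
have [p /and3P [pp /eqP lp up]] := connect_uniq_path (tconn i j).
case: (boolP (l \in i :: p)) => li.
  have /subsetP /(_ v) : X i :&: X j \subset X l.
    by apply: interp; exists p; rewrite pp lp eqxx up li.
  by rewrite inE vi vj (negbTE vl) => /(_ isT).
by apply: connect_trans ci _; apply/connectP; exists p => //; apply: avoid_path.
Qed.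

Lemma side_cover l v : v \notin X l -> exists2 c, te l c & v \in side te X l c.
Proof.
case: decomp => [[_ _ _ tconn _] cover _ _] vl; have [i vi] := cover v.
have il : i != l by apply: contraNneq vl => <-.
have [[|q1 q] /and3P [pp /eqP lp up]] := connect_uniq_path (tconn l i).
  by rewrite -lp eqxx in il.
have := branch_of_path pp up; rewrite /= in lp; rewrite lp => ib.
exists q1; first by case/andP: pp.
by rewrite inE vl; apply/existsP; exists i; rewrite ib vi.
Qed.

Lemma bigcup_sides l : \bigcup_(c in [set c | te l c]) side te X l c = ~: X l.
Proof.
apply/setP => v; rewrite inE; apply/bigcupP/idP => [[c _]|/side_cover [c tlc]].
  by rewrite inE => /andP [vl _].
by move=> vc; exists c; rewrite // inE.
Qed.

(* Sides at l through different neighbours are disjoint and not joined by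
   any edge: a bag containing both vertices would lie in both branches. *)
Lemma side_sep l c1 c2 u v : te l c1 -> te l c2 -> c1 != c2 ->
  u \in side te X l c1 -> v \in side te X l c2 -> (u != v) && ~~ e u v.
Proof.
case: (decomp) => tree _ edge _ t1 t2 c12; rewrite !inE.
move=> /andP [ul /existsP [i /andP [i1 ui]]].
move=> /andP [vl /existsP [j /andP [j2 vj]]].
have common k : u \in X k -> v \in X k -> False.
  move=> uk vk; apply: (branch_disj tree t1 t2 c12).
  - exact: branch_closed ul ui uk i1.
  - exact: branch_closed vl vj vk j2.
apply/andP; split.
  by apply/eqP => uv; subst v; apply: (common j).
by apply/negP => /edge [k /andP [uk vk]]; exact: (common k).
Qed.

Lemma side_pair_card l c : te l c ->
  #|side te X l c| + #|side te X c l| + #|X l :&: X c| <= #|V|.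
Proof.
case: (decomp) => tree _ _ _ tlc.
have opp : [disjoint side te X l c & side te X c l].
  rewrite -setI_eq0; apply/eqP/setP => v; rewrite !inE.
  apply/negbTE/negP => /andP [/andP [vl /existsP [i /andP [ib vi]]]].
  move=> /andP [_ /existsP [j /andP [jb vj]]].
  by apply: (branch_opposite tree tlc) jb; apply: branch_closed vl vi vj ib.
have sep : [disjoint side te X l c :|: side te X c l & X l :&: X c].
  rewrite -setI_eq0; apply/eqP/setP => v; rewrite !inE.
  by case: (v \in X l); case: (v \in X c); rewrite ?andbF ?andbT.
by rewrite -(cardsU_disjoint opp) -(cardsU_disjoint sep) max_card.
Qed.

End Sides.

Section Normalized.

Variables (V : finType) (e : rel V) (I : finType) (te : rel I) (r : I).
Variable X : I -> {set V}.
Hypothesis normal : normalized_tree_decomp e te r X.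

(* Adjacent bags of a normalized decomposition differ in exactly one vertex. *)
Lemma adjacent_bags_card l c : te l c ->
  #|X l| + #|X c| = 2 * #|X l :&: X c| + 1.
Proof.
case: normal => [[tree _ _ _] _ step] tlc.
have symdiff : #|X c :\: X l| + #|X l :\: X c| = 1.
  have disj (A B : {set V}) : [disjoint A :\: B & B :\: A].
    rewrite -setI_eq0; apply/eqP/setP => v; rewrite !inE.
    by do 2 case: (_ \in _).
  case: (child_or tree r tlc) => /step; rewrite cardsU_disjoint //.
  by rewrite addnC.
have := cardsID (X c) (X l); have := cardsID (X l) (X c).
by rewrite (setIC (X c)); lia.
Qed.

Definition heavy (l c : I) : bool :=
  te l c && (#|V| - #|X l| + 1 < 2 * #|side te X l c|).

(* The two ends of an edge cannot both be heavy towards each other: the two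
   sides and the common part of the bags fit into V. *)
Lemma heavy_not_both l c : heavy l c -> ~~ heavy c l.
Proof.
have [decomp _ _] := normal.
case/andP => tlc Hlc; apply/negP => /andP [_ Hcl].
have := side_pair_card decomp tlc; have := adjacent_bags_card tlc.
have := max_card (X l); have := max_card (X c); lia.
Qed.

(* Some node has no heavy side: otherwise moving from every node towards a
   heavy neighbour would never turn back, which is impossible in a tree. *)
Lemma balanced_node : exists l, forall c, te l c ->
  2 * #|side te X l c| <= #|V| - #|X l| + 1.
Proof.
case: (pickP [pred l | [forall c, ~~ heavy l c]]) => [l /forallP bal | none].
  by exists l => c tlc; move: (bal c); rewrite /heavy tlc -leqNgt.
have heavy_exists l : exists c, heavy l c.
  by move/forallPn: (none l) => [c]; rewrite negbK; exists c.
pose f l := odflt l [pick c | heavy l c].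
have f_heavy l : heavy l (f l).
  rewrite /f; case: pickP => [c //|nocand].
  by have [c] := heavy_exists l; rewrite nocand.
case: normal => [[tree _ _ _] _ _]; exfalso.
apply: (tree_no_nonbacktracking_map (f := f) tree) => [l | l].
  by case/andP: (f_heavy l).
by apply: contraNneq (heavy_not_both (f_heavy l)) => {2}<-; apply: f_heavy.
Qed.

End Normalized.

Section Blocks.

Variables (T I : finType) (N : {set I}) (A : I -> {set T}).

Lemma blocks_sep (R : T -> T -> Prop) (P Q : {set I}) u v :
  (forall c c', c \in N -> c' \in N -> c != c' ->
     forall u v, u \in A c -> v \in A c' -> R u v) ->
  P \subset N -> Q \subset N -> [disjoint P & Q] ->
  u \in \bigcup_(c in P) A c -> v \in \bigcup_(c in Q) A c -> R u v.
Proof.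
move=> sep /subsetP PN /subsetP QN dPQ /bigcupP [c cP uc] /bigcupP [c' cQ vc'].
have cc' : c != c'.
  by apply/eqP => cc'; subst c'; rewrite (disjointFr dPQ cP) in cQ.
exact: sep (PN c cP) (QN c' cQ) cc' u v uc vc'.
Qed.

Hypothesis blocks_disj : forall c c', c \in N -> c' \in N -> c != c' ->
  forall u v, u \in A c -> v \in A c' -> u != v.

Lemma unions_disjoint (P Q : {set I}) :
  P \subset N -> Q \subset N -> [disjoint P & Q] ->
  [disjoint \bigcup_(c in P) A c & \bigcup_(c in Q) A c].
Proof.
move=> sP sQ dPQ; rewrite -setI_eq0; apply/eqP/setP => v; rewrite !inE.
apply/negbTE/andP => -[vP vQ].
by have := blocks_sep blocks_disj sP sQ dPQ vP vQ; rewrite eqxx.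
Qed.

(* Blocks of size at most half of (their total + 1) can be grouped into three
   families whose unions respect the same bound: take a maximal family
   within the bound, one more block, and all the remaining blocks. *)
Lemma split_in_three (m := #|\bigcup_(c in N) A c| + 1) :
  (forall c, c \in N -> 2 * #|A c| <= m) ->
  exists P1 P2 P3 : {set I},
    [/\ P1 :|: P2 :|: P3 = N,
        [/\ [disjoint P1 & P2], [disjoint P1 & P3] & [disjoint P2 & P3]] &
        [/\ 2 * #|\bigcup_(c in P1) A c| <= m,
            2 * #|\bigcup_(c in P2) A c| <= m &
            2 * #|\bigcup_(c in P3) A c| <= m]].
Proof.
move=> small_block.
pose small (S : {set I}) :=
  (S \subset N) && (2 * #|\bigcup_(c in S) A c| <= m).
have small0 : small set0 by rewrite /small sub0set big_set0 cards0.
have [S /andP [SN S_small] S_max] := arg_maxnP (fun S : {set I} => #|S|) small0.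
case: (boolP (N \subset S)) => [NS | /subsetPn [c0 c0N c0S]].
  have SE : S = N by apply/eqP; rewrite eqEsubset SN NS.
  exists N, set0, set0; rewrite -SE !setU0 big_set0 cards0.
  by rewrite -!setI_eq0 !setI0 eqxx.
pose S' := c0 |: S; pose rest := N :\: S'.
have S'N : S' \subset N by rewrite subUset sub1set c0N SN.
have S'_big : m < 2 * #|\bigcup_(c in S') A c|.
  have : ~~ small S'.
    by apply/negP => /S_max; rewrite /geq /S' cardsU1 c0S add1n /= ltnn.
  by rewrite /small S'N -ltnNge.
have rest_disj : [disjoint rest & S'].
  rewrite -setI_eq0; apply/eqP/setP => c; rewrite /rest !inE.
  by case: (_ || _); rewrite ?andbF.
have rest_sub : \bigcup_(c in rest) A c \subset
                \bigcup_(c in N) A c :\: \bigcup_(c in S') A c.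
  apply/subsetP => v vrest; rewrite inE.
  rewrite (disjointFr (unions_disjoint (subsetDl N S') S'N rest_disj) vrest).
  move: vrest => /bigcupP [c]; rewrite inE => /andP [_ cN] vc.
  by apply/bigcupP; exists c.
have S'_in_N : \bigcup_(c in S') A c \subset \bigcup_(c in N) A c.
  by apply/bigcupsP => c cS'; apply: bigcup_sup; apply: (subsetP S'N).
exists S, [set c0], rest; split.
- apply/setP => c; rewrite !inE; case: (c =P c0) => [-> | _] /=.
    by rewrite c0N orbT.
  by case cS: (c \in S); rewrite ?(subsetP SN c cS) ?orbT.
- split; first by rewrite disjoint_sym disjoints1.
  + rewrite -setI_eq0; apply/eqP/setP => c; rewrite /rest /S' !inE.
    by case: (c \in S); rewrite ?orbT.
  + rewrite -setI_eq0; apply/eqP/setP => c; rewrite /rest /S' !inE.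
    by case: (c == c0).
- split => //; first by rewrite big_set1 small_block.
  have := subset_leq_card rest_sub; rewrite cardsD (setIidPr S'_in_N).
  by move: S'_big; rewrite /m; lia.
Qed.

End Blocks.

Lemma triple_pairwise (T : Type) (Q : T -> T -> Prop) (x0 x1 x2 x3 : T) :
  Q x1 x2 -> Q x2 x1 -> Q x1 x3 -> Q x3 x1 -> Q x2 x3 -> Q x3 x2 ->
  forall i j : 'I_3, i != j ->
    Q (nth x0 [:: x1; x2; x3] i) (nth x0 [:: x1; x2; x3] j).
Proof. by move=> ? ? ? ? ? ? [[|[|[|?]]] ?] [[|[|[|?]]] ?]. Qed.

Theorem lemma3 (V : finType) (e : rel V) (t : nat)
    (I : finType) (te : rel I) (r : I) (X : I -> {set V}) :
  simple_graph e ->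
  is_treewidth e t ->
  normalized_tree_decomp e te r X ->
  width X = t ->
  exists (l : I) (V1 V2 V3 : {set V}),
    [/\ V1 :|: V2 :|: V3 = ~: X l,
        [/\ [disjoint V1 & V2], [disjoint V1 & V3] & [disjoint V2 & V3]],
        (forall (i j : 'I_3) (Vs := [:: V1; V2; V3]) (u v : V),
            i != j -> u \in nth set0 Vs i -> v \in nth set0 Vs j -> ~~ e u v) &
        [/\ 2 * #|V1| <= #|V| - #|X l| + 1,
            2 * #|V2| <= #|V| - #|X l| + 1 &
            2 * #|V3| <= #|V| - #|X l| + 1]].
Proof.
move=> _ _ normal _; have [decomp _ _] := normal.
have [l balanced] := balanced_node normal.
pose N := [set c | te l c]; pose A := side te X l.
have cover : \bigcup_(c in N) A c = ~: X l := bigcup_sides decomp l.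
have neqA c c' : c \in N -> c' \in N -> c != c' ->
    forall u v, u \in A c -> v \in A c' -> u != v.
  rewrite !inE => tlc tlc' cc' u v uc vc'.
  by case/andP: (side_sep decomp tlc tlc' cc' uc vc').
have noedgeA c c' : c \in N -> c' \in N -> c != c' ->
    forall u v, u \in A c -> v \in A c' -> ~~ e u v.
  rewrite !inE => tlc tlc' cc' u v uc vc'.
  by case/andP: (side_sep decomp tlc tlc' cc' uc vc').
have size_W : #|\bigcup_(c in N) A c| = #|V| - #|X l|.
  by rewrite cover -(cardsC (X l)) addKn.
have smallA c : c \in N -> 2 * #|A c| <= #|\bigcup_(c in N) A c| + 1.
  by rewrite size_W inE; apply: balanced.
have [P1 [P2 [P3 [PN [d12 d13 d23] [b1 b2 b3]]]]] := split_in_three neqA smallA.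
have sub1 : P1 \subset N by rewrite -PN -setUA subsetUl.
have sub2 : P2 \subset N by rewrite -PN (setUC P1) -setUA subsetUl.
have sub3 : P3 \subset N by rewrite -PN subsetUr.
exists l, (\bigcup_(c in P1) A c), (\bigcup_(c in P2) A c).
exists (\bigcup_(c in P3) A c).
rewrite -size_W; split => //.
- by rewrite -!bigcup_setU PN cover.
- by split; apply: (unions_disjoint neqA).
move=> i j Vs u v ij; move: u v; rewrite /Vs.
pose no_edge (B B' : {set V}) := forall u v, u \in B -> v \in B' -> ~~ e u v.
apply: (triple_pairwise (Q := no_edge)) ij => u v;
  apply: (blocks_sep noedgeA) => //; by rewrite disjoint_sym.
Qed.
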